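(* Let $\alpha,\beta,\gamma,\lambda,x$ be non-negative integers with $(\alpha,\beta,\gamma,\lambda,x)\neq(0,0,0,0,0)$. Then for every integer $n\ge0$, $$T_{n+1}^{\lambda,x}(\alpha,\beta,\gamma)=\gamma\,T_n^{\lambda,x}(\alpha,\beta,\gamma-\alpha)+x\beta\lambda\sum_{k=0}^{n}\binom{n}{k}T_k^{\lambda,x}(\alpha,\beta,\gamma)\,T_{n-k}^{1,x}(\alpha,\beta,\beta-\alpha).$$
   Context: For complex numbers $c,\alpha$ and an integer $n\ge 0$ let $(c|\alpha)_n=\prod_{i=0}^{n-1}(c-i\alpha)$, with $(c|\alpha)_0=1$. Let $E_{\alpha,c}(t)=\sum_{n\ge 0}(c|\alpha)_n\,t^n/n!$, viewed as a formal power series in $t$. It equals $(1+\alpha t)^{c/\alpha}$ if $\alpha\neq0$ and $e^{ct}$ if $\alpha=0$. For complex $\alpha,\beta,\gamma,x$ and a non-negative integer $\lambda$, the numbers $T_n^{\lambda,x}(\alpha,\beta,\gamma)$, $n\ge0$, are defined by the formal power series identity $$\sum_{n\ge0}T_n^{\lambda,x}(\alpha,\beta,\gamma)\frac{t^n}{n!}=E_{\alpha,\gamma}(t)\,\bigl(1-x(E_{\alpha,\beta}(t)-1)\bigr)^{-\lambda}.$$ The third argument may be any complex number. *)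

From HB Require Import structures.
From mathcomp Require Import all_boot all_order all_algebra all_field.
Set Implicit Arguments. Unset Strict Implicit. Unset Printing Implicit Defensive.
Import Order.TTheory GRing.Theory Num.Theory.
Local Open Scope ring_scope.

Definition fps := nat -> algC.

Definition fps_one : fps := fun n => if n == 0%N then 1 else 0.
Definition fps_const (c : algC) : fps := fun n => if n == 0%N then c else 0.
Definition fps_add (f g : fps) : fps := fun n => f n + g n.
Definition fps_opp (f : fps) : fps := fun n => - f n.
Definition fps_scale (c : algC) (f : fps) : fps := fun n => c * f n.
Definition fps_mul (f g : fps) : fps :=
  fun n => \sum_(k < n.+1) f k * g (n - k)%N.
Definition fps_pow (f : fps) (j : nat) : fps := iter j (fps_mul f) fps_one.

(* Multiplicative inverse of a series f with f 0 invertible: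
   f = f0 (1 - h) with h 0 = 0, so f^{-1} = f0^{-1} \sum_j h^j, and only the
   terms j <= n contribute to the n-th coefficient. *)
Definition fps_inv (f : fps) : fps :=
  let h := fps_add fps_one (fps_opp (fps_scale (f 0%N)^-1 f)) in
  fun n => (f 0%N)^-1 * \sum_(j < n.+1) fps_pow h j n.

Definition gfact (c alpha : algC) (n : nat) : algC :=
  \prod_(i < n) (c - i%:R * alpha).

Definition Eser (alpha c : algC) : fps := fun n => gfact c alpha n / n`!%:R.

Definition Tnum (lambda : nat) (x alpha beta gamma : algC) (n : nat) : algC :=
  n`!%:R *
  fps_mul (Eser alpha gamma)
    (fps_pow (fps_inv (fps_add fps_one
                 (fps_opp (fps_scale x (fps_add (Eser alpha beta) (fps_opp fps_one))))))
             lambda) n.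

From HB Require Import structures.
From mathcomp Require Import all_boot all_order all_algebra all_field.
From mathcomp Require Import boolp.
From mathcomp Require Import ring zify.
Import Order.TTheory GRing.Theory Num.Theory.
Local Open Scope ring_scope.

(* The recurrence holds for arbitrary complex parameters, and it is
   the coefficientwise form of a differential equation.  Write
   G = 1 - x (E_{a,b} - 1), I = G^{-1} and F_c = E_{a,c} I^lam, so that
   T_n = n! [t^n] F_c.  With the formal derivative D we have
   D E_{a,c} = c E_{a,c-a},  D G = - x b E_{a,b-a}  and  D I = - D G I^2, hence
       D F_c = c F_{c-a} + lam x b F_c (E_{a,b-a} I).
   Since (n+1)! [t^(n+1)] F = n! [t^n] D F and n! [t^n] (f g) is the binomial
   convolution of the k! [t^k] f and (n-k)! [t^(n-k)] g, this is the claim. *)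

Lemma fps_ext (f g : fps) : (forall n, f n = g n) -> f = g.
Proof. by move=> fg; apply: functional_extensionality_dep. Qed.

Definition fps_zero : fps := fun _ => 0.

HB.instance Definition _ := gen_eqMixin fps.
HB.instance Definition _ := gen_choiceMixin fps.

Lemma fps_addA : associative fps_add.
Proof. by move=> f g h; apply: fps_ext => n; rewrite /fps_add addrA. Qed.
Lemma fps_addC : commutative fps_add.
Proof. by move=> f g; apply: fps_ext => n; rewrite /fps_add addrC. Qed.
Lemma fps_add0 : left_id fps_zero fps_add.
Proof. by move=> f; apply: fps_ext => n; rewrite /fps_add /fps_zero add0r. Qed.
Lemma fps_addN : left_inverse fps_zero fps_opp fps_add.
Proof. by move=> f; apply: fps_ext => n; rewrite /fps_add /fps_opp /fps_zero addNr. Qed.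

HB.instance Definition _ :=
  GRing.isZmodule.Build fps fps_addA fps_addC fps_add0 fps_addN.

Definition fps_trunc (N : nat) (f : fps) : {poly algC} := \poly_(i < N) f i.

Lemma coef_fps_trunc N f m : (m < N)%N -> (fps_trunc N f)`_m = f m.
Proof. by move=> ltmN; rewrite coef_poly ltmN. Qed.

(* The n-th coefficient of a Cauchy product only sees coefficients up to n,
   so it can be computed by any polynomials agreeing with the factors there. *)
Lemma fps_mul_coef_poly (u v : fps) (p q : {poly algC}) n :
  (forall m, (m <= n)%N -> u m = p`_m) -> (forall m, (m <= n)%N -> v m = q`_m) ->
  fps_mul u v n = (p * q)`_n.
Proof.
move=> up vq; rewrite coefM /fps_mul; apply: eq_bigr => [[k ltkn]] _ /=.
by rewrite up ?vq // ?leq_subr // -ltnS.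
Qed.

Lemma fps_mul_trunc f g n :
  fps_mul f g n = (fps_trunc n.+1 f * fps_trunc n.+1 g)`_n.
Proof. by apply: fps_mul_coef_poly => m lemn; rewrite coef_fps_trunc. Qed.

Lemma fps_mulA : associative fps_mul.
Proof.
move=> f g h; apply: fps_ext => n; set tr := fps_trunc n.+1.
have trM u v m : (m <= n)%N -> fps_mul u v m = (tr u * tr v)`_m.
  move=> lemn; apply: fps_mul_coef_poly => j lejm;
  by rewrite coef_fps_trunc // ltnS (leq_trans lejm).
have trE u m : (m <= n)%N -> u m = (tr u)`_m by move=> ?; rewrite coef_fps_trunc.
rewrite (@fps_mul_coef_poly _ _ (tr f) (tr g * tr h)); [|exact: trE|exact: trM].
rewrite mulrA; apply/esym/fps_mul_coef_poly; [exact: trM | exact: trE].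
Qed.

Lemma fps_mulC : commutative fps_mul.
Proof. by move=> f g; apply: fps_ext => n; rewrite !fps_mul_trunc mulrC. Qed.

Lemma fps_mul1 : left_id fps_one fps_mul.
Proof.
move=> f; apply: fps_ext => n.
rewrite (@fps_mul_coef_poly _ _ 1 (fps_trunc n.+1 f)).
- by rewrite mul1r coef_fps_trunc.
- by move=> m _; rewrite coef1 /fps_one; case: (m == 0%N).
- by move=> m lemn; rewrite coef_fps_trunc.
Qed.

Lemma fps_mulDl : left_distributive fps_mul fps_add.
Proof.
move=> f g h; apply: fps_ext => n.
by rewrite /fps_mul /fps_add -big_split; apply: eq_bigr => i _; rewrite mulrDl.
Qed.

Lemma fps_one_neq0 : fps_one != (0 : fps).
Proof.
by apply/eqP => /(congr1 (fun f : fps => f 0%N)); rewrite /fps_one /=; apply/eqP/oner_neq0.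
Qed.

HB.instance Definition _ := GRing.Zmodule_isComNzRing.Build fps
  fps_mulA fps_mulC fps_mul1 fps_mulDl fps_one_neq0.

Lemma fps_addE : fps_add = +%R. Proof. by []. Qed.
Lemma fps_oppE : fps_opp = -%R. Proof. by []. Qed.
Lemma fps_oneE : fps_one = 1. Proof. by []. Qed.
Lemma fps_mulE (f g : fps) : fps_mul f g = f * g. Proof. by []. Qed.

Lemma fps_powE (f : fps) j : fps_pow f j = f ^+ j.
Proof. by elim: j => [|j IH] //; rewrite exprS -IH. Qed.

Lemma fps_scaleE c f : fps_scale c f = fps_const c * f.
Proof.
apply: fps_ext => n; rewrite -fps_mulE /fps_mul big_ord_recl /= /fps_const subn0.
by rewrite big1 ?addr0 // => i _; rewrite mul0r.
Qed.

Lemma fps_coefD (f g : fps) n : (f + g) n = f n + g n. Proof. by []. Qed.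
Lemma fps_coefN (f : fps) n : (- f) n = - f n. Proof. by []. Qed.

Lemma fps_coefMn (f : fps) k n : (f *+ k) n = f n *+ k.
Proof. by elim: k => [|k IH]; rewrite ?mulr0n // !mulrS fps_coefD IH. Qed.

Lemma fps_coef_constM c (f : fps) n : (fps_const c * f) n = c * f n.
Proof. by rewrite -fps_scaleE. Qed.

Lemma fps_coef_sum (N : nat) (F : nat -> fps) n :
  (\sum_(i < N) F i) n = \sum_(i < N) F i n.
Proof. by elim/big_rec2: _ => // i y1 y2 _ <-. Qed.

Lemma egf_coefM (f g : fps) n :
  n`!%:R * (f * g) n =
  \sum_(k < n.+1) 'C(n, k)%:R * (k`!%:R * f k) * ((n - k)`!%:R * g (n - k)%N).
Proof.
rewrite -fps_mulE /fps_mul mulr_sumr; apply: eq_bigr => [[k ltkn]] _ /=.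
by rewrite -(@bin_fact n k) // !natrM; ring.
Qed.

Lemma fps_coefM_eq_low (u v w : fps) n :
  (forall m, (m <= n)%N -> v m = w m) -> (u * v) n = (u * w) n.
Proof.
move=> vw; rewrite -!fps_mulE /fps_mul; apply: eq_bigr => [[k ltkn]] _ /=.
by rewrite vw // leq_subr.
Qed.

Lemma fps_coefX_val0 (h : fps) j n : h 0%N = 0 -> (n < j)%N -> (h ^+ j) n = 0.
Proof.
move=> h0; elim: j n => [|j IH] n // ltnj.
rewrite exprS -fps_mulE /fps_mul big1 // => [[[|k] ltkn]] _ /=.
  by rewrite h0 mul0r.
by rewrite IH ?mulr0 //; lia.
Qed.

Lemma fps_geometric (h : fps) N : (1 - h) * \sum_(j < N) h ^+ j = 1 - h ^+ N.
Proof.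
elim: N => [|N IH]; first by rewrite big_ord0 mulr0 expr0 subrr.
by rewrite big_ord_recr /= mulrDr IH exprS; ring.
Qed.

(* A series G with constant term 1 is inverted by fps_inv: with h = 1 - G,
   the n-th coefficient of fps_inv G is that of the geometric sum of the
   powers h^j, j < N, for any N > n. *)
Lemma fps_mulV (G : fps) : G 0%N = 1 -> G * fps_inv G = 1.
Proof.
move=> G0.
pose h := fps_add fps_one (fps_opp (fps_scale (G 0%N)^-1 G)).
have hE : h = 1 - G.
  rewrite /h G0 invr1 fps_addE fps_oppE fps_oneE fps_scaleE; congr (_ - _).
  by apply: fps_ext => n; rewrite fps_coef_constM mul1r.
have h0 : h 0%N = 0 by rewrite hE fps_coefD fps_coefN G0 subrr.
have inv_geom n N : (n < N)%N -> fps_inv G n = (\sum_(j < N) h ^+ j) n.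
  elim: N => [//|N IH]; rewrite ltnS leq_eqVlt => /orP [/eqP <-|ltnN].
    rewrite fps_coef_sum /fps_inv /= -/h G0 invr1 mul1r.
    by apply: eq_bigr => i _; rewrite fps_powE.
  by rewrite big_ord_recr /= fps_coefD -IH // fps_coefX_val0 // addr0.
apply: fps_ext => n.
rewrite (@fps_coefM_eq_low _ _ (\sum_(j < n.+1) h ^+ j)) => [|m lemn]; last first.
  by apply: inv_geom; rewrite ltnS.
have -> : G = 1 - h by rewrite hE; ring.
by rewrite fps_geometric fps_coefD fps_coefN fps_coefX_val0 // subr0.
Qed.

Definition fps_deriv (f : fps) : fps := fun n => (n.+1)%:R * f n.+1.

Lemma egf_coef_deriv f n : n.+1`!%:R * f n.+1 = n`!%:R * fps_deriv f n.
Proof. by rewrite /fps_deriv factS natrM mulrA (mulrC n`!%:R). Qed.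

Lemma fps_derivD f g : fps_deriv (f + g) = fps_deriv f + fps_deriv g.
Proof. by apply: fps_ext => n; rewrite /fps_deriv !fps_coefD mulrDr. Qed.

Lemma fps_derivN f : fps_deriv (- f) = - fps_deriv f.
Proof. by apply: fps_ext => n; rewrite /fps_deriv !fps_coefN mulrN. Qed.

Lemma fps_deriv_const c : fps_deriv (fps_const c) = 0.
Proof. by apply: fps_ext => n; rewrite /fps_deriv /fps_const mulr0. Qed.

Lemma fps_deriv1 : fps_deriv 1 = 0.
Proof. exact: fps_deriv_const. Qed.

(* Leibniz rule, transported from the derivative of polynomials. *)
Lemma fps_derivM f g : fps_deriv (f * g) = fps_deriv f * g + f * fps_deriv g.
Proof.
apply: fps_ext => n; rewrite fps_coefD /fps_deriv; set tr := fps_trunc n.+2.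
have trE u m : (m <= n)%N -> u m = (tr u)`_m.
  by move=> lemn; rewrite coef_fps_trunc // ltnS ltnW.
have trD u m : (m <= n)%N -> fps_deriv u m = (tr u)^`()`_m.
  by move=> lemn; rewrite /fps_deriv coef_deriv coef_fps_trunc ?mulr_natl // !ltnS.
have -> : (f * g) n.+1 = (tr f * tr g)`_n.+1.
  by apply: fps_mul_coef_poly => m lemn; rewrite coef_fps_trunc.
rewrite mulr_natl -coef_deriv derivM coefD.
by congr (_ + _); apply/esym/fps_mul_coef_poly; (exact: trE || exact: trD).
Qed.

Lemma fps_derivX f k : fps_deriv (f ^+ k.+1) = (f ^+ k * fps_deriv f) *+ k.+1.
Proof.
elim: k => [|k IH]; first by rewrite expr1 expr0 mul1r.
by rewrite exprS fps_derivM IH exprS -mulr_natr -[_ *+ k.+2]mulr_natr; ring.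
Qed.

Lemma fps_deriv_inv G I : G * I = 1 -> fps_deriv I = - (fps_deriv G * I * I).
Proof.
move=> GI; have : fps_deriv (G * I) = 0 by rewrite GI fps_deriv1.
rewrite fps_derivM => /eqP; rewrite addr_eq0 => /eqP ->.
by rewrite mulNr opprK mulrAC GI mul1r.
Qed.

Lemma fps_deriv_invX G I k : G * I = 1 ->
  fps_deriv (I ^+ k) = - (I ^+ k * I * fps_deriv G) *+ k.
Proof.
case: k => [|k] GI; first by rewrite expr0 fps_deriv1 mulr0n.
by rewrite fps_derivX (fps_deriv_inv _ _ GI) exprS; congr (_ *+ _); ring.
Qed.

Lemma gfactS c a n : gfact c a n.+1 = c * gfact (c - a) a n.
Proof.
rewrite /gfact big_ord_recl /= mul0r subr0; congr (_ * _).
by apply: eq_bigr => i _; rewrite /bump /= add1n -addn1 natrD; ring.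
Qed.

Lemma Eser0 a c : Eser a c 0%N = 1.
Proof. by rewrite /Eser /gfact big_ord0 divr1. Qed.

Lemma fps_deriv_Eser a c : fps_deriv (Eser a c) = fps_const c * Eser a (c - a).
Proof.
apply: fps_ext => n; rewrite fps_coef_constM /fps_deriv /Eser gfactS factS natrM.
have Sn_neq0 : (n.+1)%:R != 0 :> algC by rewrite pnatr_eq0.
have fact_neq0 : (n`!)%:R != 0 :> algC by rewrite pnatr_eq0 -lt0n fact_gt0.
by field; rewrite fact_neq0 nat1r Sn_neq0.
Qed.

Definition Gser (x a b : algC) : fps := 1 - fps_const x * (Eser a b - 1).

Definition Tser (lam : nat) (x a b c : algC) : fps :=
  Eser a c * fps_inv (Gser x a b) ^+ lam.

Lemma Tnum_Tser lam x a b c n : Tnum lam x a b c n = n`!%:R * Tser lam x a b c n.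
Proof. by rewrite /Tnum fps_powE fps_scaleE. Qed.

Lemma Gser0 x a b : Gser x a b 0%N = 1.
Proof. by rewrite /Gser fps_coefD fps_coefN fps_coef_constM fps_coefD fps_coefN Eser0 subrr mulr0 subr0. Qed.

Lemma fps_deriv_Gser x a b :
  fps_deriv (Gser x a b) = - (fps_const x * (fps_const b * Eser a (b - a))).
Proof.
rewrite fps_derivD fps_deriv1 add0r fps_derivN fps_derivM fps_derivD fps_derivN.
by rewrite fps_deriv1 oppr0 addr0 fps_deriv_Eser fps_deriv_const mul0r add0r.
Qed.

Lemma fps_deriv_Tser lam x a b c :
  fps_deriv (Tser lam x a b c) =
    fps_const c * Tser lam x a b (c - a)
  + (fps_const x * (fps_const b * (Tser lam x a b c * Tser 1 x a b (b - a)))) *+ lam.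
Proof.
have GI : Gser x a b * fps_inv (Gser x a b) = 1 by apply/fps_mulV/Gser0.
rewrite /Tser fps_derivM fps_deriv_Eser (fps_deriv_invX _ _ lam GI) fps_deriv_Gser.
by rewrite mulrnAr expr1; congr (_ + _); [ring | congr (_ *+ _); ring].
Qed.

Lemma Tnum_recurrence (lam : nat) (x a b c : algC) n :
  Tnum lam x a b c n.+1 =
    c * Tnum lam x a b (c - a) n
  + x * b * lam%:R *
      \sum_(k < n.+1) 'C(n, k)%:R * Tnum lam x a b c k
                        * Tnum 1 x a b (b - a) (n - k)%N.
Proof.
rewrite Tnum_Tser egf_coef_deriv fps_deriv_Tser fps_coefD fps_coefMn !fps_coef_constM.
rewrite mulrDr Tnum_Tser mulrCA; congr (_ + _).
under eq_bigr do rewrite !Tnum_Tser.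
rewrite -egf_coefM -mulr_natr.
by move: (_ * _ : fps) => T; ring.
Qed.

Theorem theorem9 (alpha beta gamma lambda x : nat)
  (hnz : (alpha, beta, gamma, lambda, x) <> (0%N, 0%N, 0%N, 0%N, 0%N)) (n : nat) :
  Tnum lambda x%:R alpha%:R beta%:R gamma%:R n.+1 =
    gamma%:R * Tnum lambda x%:R alpha%:R beta%:R (gamma%:R - alpha%:R) n
  + x%:R * beta%:R * lambda%:R *
      \sum_(k < n.+1) 'C(n, k)%:R * Tnum lambda x%:R alpha%:R beta%:R gamma%:R k
                        * Tnum 1 x%:R alpha%:R beta%:R (beta%:R - alpha%:R) (n - k)%N.
Proof. exact: Tnum_recurrence. Qed.
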